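(* There is a constant $C > 0$ such that for any $n \ge 2$ and any $p \in \mathcal{P}_n$, $$\max_{|\theta| \le n^{-2/5}} |p(e^{i \theta})| \ge \exp(-Cn^{1/5}\log^5 n).$$
   Context: $\mathcal{P}_n$ is the set of all polynomials $p(z) = 1-\sigma z^d+\sum_{j = n^{1/5}}^n c_j z^j \in \mathbb{C}[z]$ with $1 \le d < n^{1/5}$ an integer, $\sigma \in \{0,1\}$, and complex coefficients satisfying $|c_j| \le 1$ for each $j$ (the sum runs over integers $j$ with $n^{1/5} \le j \le n$; floor functions are omitted). $\log$ is the natural logarithm. *)

From Stdlib Require Import Reals.
From Coquelicot Require Import Coquelicot.
Open Scope R_scope.

Definition n15 (n : nat) : R := Rpower (INR n) (1/5).

Definition pval (n d : nat) (sigma : bool) (c : nat -> C) (z : C) : C :=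
  Cminus (RtoC 1) (Cmult (if sigma then RtoC 1 else RtoC 0) (Cpow z d))
  + sum_n (fun j => if Rle_dec (n15 n) (INR j) then Cmult (c j) (Cpow z j)
                    else RtoC 0) n.

Definition cexpi (theta : R) : C := (cos theta, sin theta).

(* Suppose |p(e^{iθ})| <= ε on the arc |θ| <= δ = n^{-2/5} = m^{-2}, where m = n^{1/5}.
   At the real point a = 1 - s, with s ≈ log n / m, the terms of degree >= m are negligible,
   so |p(a)| >= s/2.  The polynomial P(z) = (1 + a z)^n p((z + a) / (1 + a z)) has degree n
   and P(0) = p(a).  By the mean value property on roots of unity, the product of the
   rotations P(ω^k z) over the N-th roots of unity ω^k (N = 2^r) has modulus at least
   |p(a)|^N at some point z of the unit circle.  There |∏_k (1 + a ω^k z)| = |1 - (-a z)^N| <= 2,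
   the points w_k = (ω^k z + a) / (1 + a ω^k z) lie on the unit circle, where |p| <= n + 3,
   and since the Möbius map sends the arc |arg z| <= δ / (2s) into the arc |θ| <= δ, about
   N δ / (4π s) of the w_k are points where |p| <= ε.  Taking logarithms gives
   log (1/ε) = O(m log^2 n). *)

From Stdlib Require Import Reals Lra Lia Psatz Classical.
From Coquelicot Require Import Coquelicot.
Open Scope R_scope.

(** * Finite sums and products in [C] *)

(* Coquelicot's lemmas on [sum_n] are stated for the generic [plus] and [mult]; restating them
   over [C] (with the equality typed in [C]) lets [ring] work on the results. *)
Lemma sum_n_C_Sn (a : nat -> C) n : sum_n a (S n) = (sum_n a n + a (S n))%C.
Proof. exact (sum_Sn a n). Qed.

Lemma sum_n_C_shift (a : nat -> C) n :
  sum_n a (S n) = (a O + sum_n (fun j => a (S j)) n)%C.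
Proof. unfold sum_n. rewrite sum_Sn_m by lia. now rewrite sum_n_m_S. Qed.

Lemma sum_n_C_ext (a b : nat -> C) n :
  (forall j, (j <= n)%nat -> a j = b j) -> sum_n a n = sum_n b n :> C.
Proof. exact (sum_n_ext_loc a b n). Qed.

Lemma sum_n_C_plus (a b : nat -> C) n :
  sum_n (fun j => a j + b j)%C n = (sum_n a n + sum_n b n)%C.
Proof. exact (sum_n_plus a b n). Qed.

Lemma sum_n_C_mult_l (c : C) (a : nat -> C) n :
  sum_n (fun j => c * a j)%C n = (c * sum_n a n)%C.
Proof. exact (sum_n_mult_l c a n). Qed.

Lemma sum_n_C_const (c : C) n : sum_n (fun _ => c) n = (INR (S n) * c)%C :> C.
Proof.
  induction n as [|n IH]; [rewrite sum_O; change (INR 1) with 1; ring|].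
  rewrite sum_n_C_Sn, IH, (S_INR (S n)), RtoC_plus. ring.
Qed.

Lemma sum_n_C_single (a : nat -> C) n :
  (forall j, (1 <= j <= n)%nat -> a j = 0%C) -> sum_n a n = a O :> C.
Proof.
  induction n as [|n IH]; intros Ha; [apply sum_O|].
  rewrite sum_n_C_Sn, IH, (Ha (S n)) by (lia || (intros; apply Ha; lia)). ring.
Qed.

Lemma Cmod_sum_n_le (a : nat -> C) n y :
  (forall j, (j <= n)%nat -> Cmod (a j) <= y) -> Cmod (sum_n a n) <= INR (S n) * y.
Proof.
  induction n as [|n IH]; intros Ha.
  - rewrite sum_O. simpl. rewrite Rmult_1_l. apply Ha; lia.
  - rewrite sum_n_C_Sn, (S_INR (S n)).
    eapply Rle_trans; [apply Cmod_triangle|].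
    assert (Cmod (sum_n a n) <= INR (S n) * y) by (apply IH; intros; apply Ha; lia).
    assert (Cmod (a (S n)) <= y) by (apply Ha; lia). lra.
Qed.

Lemma Cmod_sum_n_lt (a : nat -> C) n y :
  (forall j, (j <= n)%nat -> Cmod (a j) < y) -> Cmod (sum_n a n) < INR (S n) * y.
Proof.
  induction n as [|n IH]; intros Ha.
  - rewrite sum_O. simpl. rewrite Rmult_1_l. apply Ha; lia.
  - rewrite sum_n_C_Sn, (S_INR (S n)).
    eapply Rle_lt_trans; [apply Cmod_triangle|].
    assert (Cmod (sum_n a n) < INR (S n) * y) by (apply IH; intros; apply Ha; lia).
    assert (Cmod (a (S n)) < y) by (apply Ha; lia). lra.
Qed.

(* [cprod f N] multiplies the [f k] for [k < N], whereas [sum_n a n] adds the [a j] for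
   [j <= n]. *)
Fixpoint cprod (f : nat -> C) (N : nat) : C :=
  match N with O => 1%C | S N' => (cprod f N' * f N')%C end.

Lemma cprod_ext f g N : (forall k, (k < N)%nat -> f k = g k) -> cprod f N = cprod g N.
Proof.
  induction N as [|N IH]; intros H; simpl; auto.
  rewrite IH, H by (lia || (intros; apply H; lia)). reflexivity.
Qed.

Lemma cprod_add f N M :
  cprod f (N + M) = (cprod f N * cprod (fun k => f (N + k)%nat) M)%C.
Proof.
  induction M as [|M IH]; simpl; [rewrite Nat.add_0_r; ring|].
  rewrite Nat.add_succ_r. simpl. rewrite IH. ring.
Qed.

Lemma cprod_S_first f N : cprod f (S N) = (f O * cprod (fun k => f (S k)) N)%C.
Proof. rewrite <- Nat.add_1_l, cprod_add. simpl. ring. Qed.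

Lemma cprod_mul f g N : cprod (fun k => f k * g k)%C N = (cprod f N * cprod g N)%C.
Proof. induction N as [|N IH]; simpl; [ring|]. rewrite IH. ring. Qed.

Lemma cprod_const (x : C) N : cprod (fun _ => x) N = (x ^ N)%C.
Proof. induction N as [|N IH]; simpl; auto. rewrite IH. ring. Qed.

Lemma cprod_pow f N j : cprod (fun k => f k ^ j)%C N = (cprod f N ^ j)%C.
Proof.
  induction N as [|N IH]; simpl; [now rewrite Cpow_1_l|].
  now rewrite IH, Cpow_mult_l.
Qed.

Lemma cprod_rotate f N q :
  (forall k, f (k + N)%nat = f k) -> cprod (fun k => f (k + q)%nat) N = cprod f N.
Proof.
  intros Hf. induction q as [|q IH].
  - apply cprod_ext. intros k _. now rewrite Nat.add_0_r.
  - rewrite <- IH. destruct N as [|N]; [reflexivity|].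
    rewrite (cprod_S_first (fun k => f (k + q)%nat)). simpl cprod.
    replace (f (N + S q)%nat) with (f (0 + q)%nat)
      by (rewrite <- (Hf (0 + q)%nat); f_equal; lia).
    rewrite Cmult_comm. f_equal. apply cprod_ext. intros k _. f_equal. lia.
Qed.

Lemma Cmod_cprod_le_pow f N B :
  (forall k, (k < N)%nat -> Cmod (f k) <= B) -> Cmod (cprod f N) <= B ^ N.
Proof.
  induction N as [|N IH]; intros H; simpl; [rewrite Cmod_1; lra|].
  rewrite Cmod_mult, Rmult_comm.
  apply Rmult_le_compat; try apply Cmod_ge_0; [apply H; lia|].
  apply IH. intros; apply H; lia.
Qed.

Lemma Cmod_cprod_le f N T e B : (T <= N)%nat ->
  (forall k, (k < T)%nat -> Cmod (f k) <= e) ->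
  (forall k, (k < N)%nat -> Cmod (f k) <= B) ->
  Cmod (cprod f N) <= e ^ T * B ^ (N - T).
Proof.
  intros HT He HB. replace N with (T + (N - T))%nat at 1 by lia.
  rewrite cprod_add, Cmod_mult.
  apply Rmult_le_compat; try apply Cmod_ge_0.
  - now apply Cmod_cprod_le_pow.
  - apply Cmod_cprod_le_pow. intros k Hk. apply HB. lia.
Qed.

(** * Polynomial functions *)

Definition is_poly (f : C -> C) (D : nat) : Prop :=
  exists b : nat -> C, forall z, f z = sum_n (fun j => b j * z ^ j)%C D.

Lemma is_poly_ext f g D : (forall z, f z = g z) -> is_poly f D -> is_poly g D.
Proof. intros H [b Hb]. exists b. intros z. rewrite <- H. apply Hb. Qed.

Lemma is_poly_const c : is_poly (fun _ => c) 0.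
Proof. exists (fun _ => c). intros z. rewrite sum_O. simpl. ring. Qed.

Lemma is_poly_weaken f D E : (D <= E)%nat -> is_poly f D -> is_poly f E.
Proof.
  intros HDE [b Hb]. exists (fun j => if Nat.leb j D then b j else 0%C). intros z.
  rewrite Hb. induction HDE as [|E HDE IH].
  - apply sum_n_C_ext. intros j Hj. now rewrite (proj2 (Nat.leb_le j D) Hj).
  - rewrite sum_n_C_Sn, <- IH, (proj2 (Nat.leb_gt (S E) D)) by lia.
    now rewrite Cmult_0_l, Cplus_0_r.
Qed.

Lemma is_poly_add f g D : is_poly f D -> is_poly g D -> is_poly (fun z => f z + g z)%C D.
Proof.
  intros [b Hb] [b' Hb']. exists (fun j => b j + b' j)%C. intros z.
  rewrite Hb, Hb', <- sum_n_C_plus. apply sum_n_C_ext. intros j _. ring.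
Qed.

Lemma is_poly_scal c f D : is_poly f D -> is_poly (fun z => c * f z)%C D.
Proof.
  intros [b Hb]. exists (fun j => c * b j)%C. intros z.
  rewrite Hb, <- sum_n_C_mult_l. apply sum_n_C_ext. intros j _. ring.
Qed.

Lemma is_poly_sum (F : nat -> C -> C) D M :
  (forall j, (j <= M)%nat -> is_poly (F j) D) -> is_poly (fun z => sum_n (fun j => F j z) M) D.
Proof.
  induction M as [|M IH]; intros H.
  - eapply is_poly_ext; [|apply (H O); lia]. intros z. now rewrite sum_O.
  - eapply is_poly_ext; [intros z; symmetry; apply sum_n_C_Sn|].
    apply is_poly_add; [apply IH; intros; apply H|apply H]; lia.
Qed.

Lemma is_poly_mul_X f D : is_poly f D -> is_poly (fun z => z * f z)%C (S D).
Proof.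
  intros [b Hb]. exists (fun j => match j return C with O => 0 | S j => b j end). intros z.
  rewrite sum_n_C_shift, Hb, <- sum_n_C_mult_l.
  rewrite Cmult_0_l, Cplus_0_l. apply sum_n_C_ext. intros j _. rewrite Cpow_S. ring.
Qed.

Lemma is_poly_mul_Xn f D j : is_poly f D -> is_poly (fun z => z ^ j * f z)%C (j + D).
Proof.
  intros Hf. induction j as [|j IH].
  - eapply is_poly_ext; [|exact Hf]. intros z. simpl. ring.
  - eapply is_poly_ext; [|exact (is_poly_mul_X _ _ IH)]. intros z. simpl. ring.
Qed.

Lemma is_poly_mul f g D E : is_poly f D -> is_poly g E -> is_poly (fun z => f z * g z)%C (D + E).
Proof.
  intros [b Hb] Hg.
  eapply is_poly_ext with (f := fun z => sum_n (fun j => b j * (z ^ j * g z))%C D).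
  - intros z. rewrite Hb, Cmult_comm, <- sum_n_C_mult_l. apply sum_n_C_ext. intros j _. ring.
  - apply is_poly_sum. intros j Hj. apply is_poly_scal.
    apply is_poly_weaken with (j + E)%nat; [lia|]. now apply is_poly_mul_Xn.
Qed.

Lemma is_poly_pow f D k : is_poly f D -> is_poly (fun z => f z ^ k)%C (k * D).
Proof.
  intros Hf. induction k as [|k IH]; [exact (is_poly_const 1)|].
  exact (is_poly_mul _ _ _ _ Hf IH).
Qed.

Lemma is_poly_affine (u v : C) : is_poly (fun z => u + v * z)%C 1.
Proof.
  exists (fun j => match j return C with O => u | _ => v end). intros z.
  rewrite sum_n_C_Sn, sum_O. simpl. ring.
Qed.

Lemma is_poly_comp_scal f D (w : C) : is_poly f D -> is_poly (fun z => f (w * z))%C D.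
Proof.
  intros [b Hb]. exists (fun j => b j * w ^ j)%C. intros z. rewrite Hb.
  apply sum_n_C_ext. intros j _. rewrite Cpow_mult_l. ring.
Qed.

Lemma is_poly_cprod_rot f D (w : nat -> C) N :
  is_poly f D -> is_poly (fun z => cprod (fun k => f (w k * z))%C N) (N * D).
Proof.
  intros Hf. induction N as [|N IH]; [exact (is_poly_const 1)|].
  rewrite Nat.mul_succ_l.
  exact (is_poly_mul _ _ _ _ IH (is_poly_comp_scal _ _ (w N) Hf)).
Qed.

(** * Roots of unity *)

Lemma cexpi_add a b : (cexpi a * cexpi b)%C = cexpi (a + b).
Proof. unfold cexpi, Cmult; simpl. rewrite cos_plus, sin_plus. f_equal; ring. Qed.

Lemma cexpi_0 : cexpi 0 = 1%C.
Proof. unfold cexpi. rewrite cos_0, sin_0. reflexivity. Qed.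

Lemma cexpi_pow t j : (cexpi t ^ j)%C = cexpi (INR j * t).
Proof.
  induction j as [|j IH]; [simpl; now rewrite Rmult_0_l, cexpi_0|].
  rewrite Cpow_S, IH, cexpi_add, S_INR. f_equal. ring.
Qed.

Lemma cexpi_2PI_mult k : cexpi (2 * INR k * PI) = 1%C.
Proof.
  rewrite <- (Rplus_0_l (2 * INR k * PI)). unfold cexpi.
  rewrite cos_period, sin_period, cos_0, sin_0. reflexivity.
Qed.

Lemma Cmod_cexpi t : Cmod (cexpi t) = 1.
Proof.
  unfold Cmod, cexpi; simpl. rewrite <- sqrt_1 at 3. f_equal.
  pose proof (sin2_cos2 t). unfold Rsqr in *. lra.
Qed.

Lemma cexpi_neq_1 t : 0 < t < 2 * PI -> cexpi t <> 1%C.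
Proof.
  intros Ht H. apply (f_equal fst) in H. unfold cexpi in H; simpl in H.
  assert (0 < sin (t / 2)) by (apply sin_gt_0; lra).
  replace t with (2 * (t / 2)) in H by field. rewrite cos_2a_sin in H. nra.
Qed.

Definition unity_root (N : nat) : C := cexpi (2 * PI / INR N).

Lemma unity_root_pow_mult N k : (0 < N)%nat -> (unity_root N ^ (k * N))%C = 1%C.
Proof.
  intros HN. unfold unity_root. rewrite cexpi_pow, mult_INR, <- (cexpi_2PI_mult k).
  f_equal. assert (0 < INR N) by (apply lt_0_INR; lia). field. lra.
Qed.

Lemma unity_root_pow_neq_1 N j : (0 < j < N)%nat -> (unity_root N ^ j)%C <> 1%C.
Proof.
  intros Hj. unfold unity_root. rewrite cexpi_pow. apply cexpi_neq_1.
  assert (0 < INR j < INR N) by (split; [apply lt_0_INR|apply lt_INR]; lia).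
  pose proof PI_RGT_0.
  replace (INR j * (2 * PI / INR N)) with (2 * PI * (INR j / INR N)) by (field; lra).
  split; [apply Rmult_lt_0_compat; [lra|apply Rdiv_lt_0_compat; lra]|].
  rewrite <- (Rmult_1_r (2 * PI)) at 2. apply Rmult_lt_compat_l; [lra|].
  apply Rmult_lt_reg_r with (INR N); [lra|]. field_simplify; lra.
Qed.

Lemma geometric_sum_root_of_unity (q : C) M :
  (q ^ S M)%C = 1%C -> q <> 1%C -> sum_n (fun l => q ^ l)%C M = 0%C :> C.
Proof.
  intros Hq1 Hq.
  assert (Htel : forall M, ((q - 1) * sum_n (fun l => q ^ l)%C M = q ^ S M - 1)%C).
  { induction M0 as [|M0 IH]; [rewrite sum_O; simpl; ring|].
    rewrite sum_n_C_Sn, Cmult_plus_distr_l, IH. simpl. ring. }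
  assert (Hq0 : (q - 1)%C <> 0%C) by (intros E; apply Hq; rewrite <- (Cplus_0_l 1), <- E; ring).
  rewrite <- (Cmult_1_l (sum_n _ M)), <- (Cinv_l _ Hq0), <- Cmult_assoc, Htel, Hq1.
  ring.
Qed.

Lemma poly_mean_value_roots_of_unity G D M : is_poly G D -> (D <= M)%nat ->
  sum_n (fun l => G (unity_root (S M) ^ l)%C) M = (INR (S M) * G 0%C)%C :> C.
Proof.
  intros [b Hb] HDM.
  transitivity (sum_n (fun j => b j * sum_n (fun l => (unity_root (S M) ^ j) ^ l) M)%C D).
  - rewrite (sum_n_C_ext _ (fun l => sum_n (fun j => b j * (unity_root (S M) ^ j) ^ l) D)%C)
      by (intros l _; rewrite Hb; apply sum_n_C_ext; intros j _;
          now rewrite <- !Cpow_mult_r, Nat.mul_comm).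
    rewrite sum_n_switch. apply sum_n_C_ext. intros j _. now rewrite sum_n_C_mult_l.
  - rewrite sum_n_C_single.
    + rewrite (sum_n_C_ext _ (fun _ => 1%C)) by (intros l _; apply Cpow_1_l).
      rewrite sum_n_C_const, Hb, sum_n_C_single.
      * simpl. ring.
      * intros j Hj. destruct j as [|j]; [lia|]. simpl. ring.
    + intros j Hj. rewrite geometric_sum_root_of_unity; [ring| |].
      * rewrite <- Cpow_mult_r. apply unity_root_pow_mult. lia.
      * apply unity_root_pow_neq_1. lia.
Qed.

Lemma poly_max_on_roots_of_unity G D M : is_poly G D -> (D <= M)%nat ->
  exists l, (l <= M)%nat /\ Cmod (G 0%C) <= Cmod (G (unity_root (S M) ^ l)%C).
Proof.
  intros HG HDM. apply NNPP. intros Hno.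
  assert (Hlt : Cmod (sum_n (fun l => G (unity_root (S M) ^ l)%C) M) < INR (S M) * Cmod (G 0%C)).
  { apply Cmod_sum_n_lt. intros l Hl. apply Rnot_le_lt. intros Hle. apply Hno. eauto. }
  rewrite (poly_mean_value_roots_of_unity G D M HG HDM), Cmod_mult, Cmod_R,
    Rabs_pos_eq in Hlt by apply pos_INR.
  lra.
Qed.

(* The factors k and k + 2^r of the product over the 2^(r+1)-th roots of unity pair up as
   (1 + x ζ^k)(1 - x ζ^k) = 1 - x^2 (ζ^2)^k, halving the product; hence N = 2^r below. *)
Lemma cprod_one_plus_unity_roots r (x : C) :
  cprod (fun k => 1 + x * unity_root (2 ^ r) ^ k)%C (2 ^ r) = (1 - (- x) ^ (2 ^ r))%C.
Proof.
  revert x. induction r as [|r IH]; intros x; [simpl; ring|].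
  set (N := (2 ^ r)%nat). replace (2 ^ S r)%nat with (N + N)%nat by (simpl; lia).
  assert (HN : 0 < INR N) by (apply lt_0_INR; unfold N; pose proof (Nat.pow_nonzero 2 r); lia).
  rewrite cprod_add, <- cprod_mul.
  rewrite (cprod_ext _ (fun k => 1 + (- (x * x)) * unity_root N ^ k)%C).
  - rewrite IH, Cpow_add_r, <- Cpow_mult_l. f_equal. f_equal. ring.
  - intros k _. unfold unity_root. rewrite !cexpi_pow.
    set (t := INR k * (2 * PI / INR (N + N))).
    replace (INR (N + k) * (2 * PI / INR (N + N))) with (t + PI)
      by (unfold t; rewrite !plus_INR; field; lra).
    replace (INR k * (2 * PI / INR N)) with (t + t) by (unfold t; rewrite plus_INR; field; lra).
    rewrite <- (cexpi_add t t).
    replace (cexpi (t + PI)) with (- cexpi t)%C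
      by (unfold cexpi, Copp; simpl; now rewrite neg_cos, neg_sin).
    ring.
Qed.

Lemma rotation_product_lower_bound P D N : is_poly P D -> (0 < N)%nat ->
  exists beta, 0 <= beta <= 2 * PI / INR N /\
    Cmod (P 0%C) ^ N
    <= Cmod (cprod (fun k => P (cexpi (beta + INR k * (2 * PI / INR N)))) N).
Proof.
  (* G is invariant under z -> unity_root N * z, so the point given by the mean value
     property can be rotated into the sector [0, 2π/N]. *)
  intros HP HN. pose proof PI_RGT_0 as HPI.
  set (G := fun z => cprod (fun k => P (unity_root N ^ k * z))%C N).
  set (M := (N * (D + 1) - 1)%nat).
  assert (HSM : S M = (N * (D + 1))%nat) by (unfold M; nia).
  destruct (poly_max_on_roots_of_unity G (N * D) M) as [l [_ Hl]];
    [apply is_poly_cprod_rot, HP|unfold M; nia|].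
  set (q := (l / (D + 1))%nat). set (rr := (l mod (D + 1))%nat).
  assert (Hl_eq : l = ((D + 1) * q + rr)%nat) by (apply Nat.div_mod; lia).
  assert (Hrr : (rr < D + 1)%nat) by (apply Nat.mod_upper_bound; lia).
  assert (HNr : 0 < INR N) by (apply lt_0_INR; lia).
  assert (HDr : INR rr <= INR (D + 1)) by (apply le_INR; lia).
  assert (HD1 : 0 < INR (D + 1)) by (apply lt_0_INR; lia).
  set (beta := INR rr * (2 * PI / INR (S M))).
  set (f := fun j => P (cexpi (beta + INR j * (2 * PI / INR N)))).
  exists beta. split.
  - unfold beta. rewrite HSM, mult_INR. split.
    + apply Rmult_le_pos; [apply pos_INR|]. apply Rdiv_le_0_compat; [lra|nra].
    + replace (2 * PI / INR N) with (INR (D + 1) * (2 * PI / (INR N * INR (D + 1))))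
        by (field; lra).
      apply Rmult_le_compat_r; [|lra]. apply Rdiv_le_0_compat; [lra|nra].
  - assert (HG0 : G 0%C = (P 0%C ^ N)%C).
    { unfold G. rewrite <- cprod_const. apply cprod_ext. intros k _. now rewrite Cmult_0_r. }
    assert (HGl : G (unity_root (S M) ^ l)%C = cprod (fun k => f (k + q)%nat) N).
    { unfold G. apply cprod_ext. intros k _. unfold f, unity_root.
      rewrite !cexpi_pow, cexpi_add. f_equal. f_equal. unfold beta.
      rewrite HSM, Hl_eq, !plus_INR, !mult_INR, plus_INR.
      rewrite plus_INR in HD1. field. split; lra. }
    assert (Hf : forall j, f (j + N)%nat = f j).
    { intros j. unfold f.
      replace (beta + INR (j + N) * (2 * PI / INR N))
        with (beta + INR j * (2 * PI / INR N) + 2 * INR 1 * PI)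
        by (rewrite plus_INR; simpl; field; lra).
      now rewrite <- cexpi_add, cexpi_2PI_mult, Cmult_1_r. }
    rewrite HG0, HGl, cprod_rotate, Cmod_pow in Hl by exact Hf. exact Hl.
Qed.

Lemma Cmod_cprod_one_plus_rotated_roots r (a beta : R) : 0 <= a <= 1 ->
  Cmod (cprod (fun k => 1 + RtoC a * cexpi (beta + INR k * (2 * PI / INR (2 ^ r))))%C (2 ^ r))
  <= 2.
Proof.
  intros Ha.
  rewrite (cprod_ext _ (fun k => 1 + (RtoC a * cexpi beta) * unity_root (2 ^ r) ^ k)%C)
    by (intros k _; unfold unity_root; rewrite cexpi_pow, <- Cmult_assoc, cexpi_add; reflexivity).
  rewrite cprod_one_plus_unity_roots.
  eapply Rle_trans; [apply Cmod_triangle|].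
  rewrite Cmod_1, Cmod_opp, Cmod_pow, Cmod_opp, Cmod_mult, Cmod_cexpi, Rmult_1_r, Cmod_R,
    Rabs_pos_eq by lra.
  assert (a ^ 2 ^ r <= 1) by (rewrite <- (pow1 (2 ^ r)); apply pow_incr; lra). lra.
Qed.

(** * The Möbius map z ↦ (z + a) / (1 + a z) on the unit circle *)

Lemma is_poly_mobius_transform f D (a : C) : is_poly f D ->
  exists P, is_poly P D /\
    forall z w, (w * (1 + a * z) = z + a)%C -> P z = ((1 + a * z) ^ D * f w)%C.
Proof.
  intros [b Hb].
  exists (fun z => sum_n (fun j => b j * ((z + a) ^ j * (1 + a * z) ^ (D - j)))%C D). split.
  - apply is_poly_sum. intros j Hj. apply is_poly_scal.
    apply is_poly_weaken with (j * 1 + (D - j) * 1)%nat; [lia|].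
    apply is_poly_mul; apply is_poly_pow.
    + eapply is_poly_ext; [|apply (is_poly_affine a 1)]. intros z. simpl. ring.
    + apply is_poly_affine.
  - intros z w Hw. rewrite Hb, <- sum_n_C_mult_l. apply sum_n_C_ext. intros j Hj.
    replace D with (j + (D - j))%nat at 2 by lia.
    rewrite Cpow_add_r, <- Hw, Cpow_mult_l. ring.
Qed.

(* [(e^{ib} + a) / (1 + a e^{ib})] in real coordinates. *)
Definition mobius (a b : R) : C :=
  ((cos b * (1 + a ^ 2) + 2 * a) / (1 + 2 * a * cos b + a ^ 2),
   sin b * (1 - a ^ 2) / (1 + 2 * a * cos b + a ^ 2)).

Lemma mobius_denom_pos a b : 0 <= a < 1 -> 0 < 1 + 2 * a * cos b + a ^ 2.
Proof. intros Ha. pose proof (COS_bound b). nra. Qed.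

Lemma mobius_spec a b : 0 <= a < 1 ->
  (mobius a b * (1 + RtoC a * cexpi b) = cexpi b + RtoC a)%C.
Proof.
  intros Ha. pose proof (mobius_denom_pos a b Ha). pose proof (sin2_cos2 b) as E.
  unfold Rsqr in E. unfold mobius, cexpi, Cmult, Cplus, RtoC; simpl.
  f_equal; field_simplify_eq; try lra;
    replace (sin b ^ 2) with (1 - cos b ^ 2) by (simpl; lra); ring.
Qed.

Lemma mobius_norm a b : 0 <= a < 1 -> fst (mobius a b) ^ 2 + snd (mobius a b) ^ 2 = 1.
Proof.
  intros Ha. pose proof (mobius_denom_pos a b Ha). pose proof (sin2_cos2 b) as E.
  unfold Rsqr in E. unfold mobius; simpl. field_simplify_eq; [|lra].
  replace (sin b ^ 2) with (1 - cos b ^ 2) by (simpl; lra). ring.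
Qed.

Lemma Cmod_mobius a b : 0 <= a < 1 -> Cmod (mobius a b) = 1.
Proof. intros Ha. unfold Cmod. rewrite mobius_norm by exact Ha. apply sqrt_1. Qed.

Lemma mobius_re_defect a b : 0 <= a < 1 ->
  1 - fst (mobius a b) = (1 - a) ^ 2 * (1 - cos b) / (1 + 2 * a * cos b + a ^ 2).
Proof. intros Ha. pose proof (mobius_denom_pos a b Ha). unfold mobius; simpl. field. lra. Qed.

Lemma cos_taylor_bounds x : -2 <= x <= 2 -> 1 - x ^ 2 / 2 <= cos x <= 1 - x ^ 2 / 2 + x ^ 4 / 24.
Proof.
  intros Hx. destruct (pre_cos_bound x 0) as [Hlo Hhi]; try lra.
  unfold cos_approx, cos_term in Hlo, Hhi. simpl in Hlo, Hhi. split; lra.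
Qed.

Lemma mobius_re_ge_cos s delta b : 0 < delta <= s -> s <= 1 -> 0 <= b <= delta / (2 * s) ->
  cos delta <= fst (mobius (1 - s) b).
Proof.
  intros Hdelta Hs Hb. set (a := 1 - s). assert (Ha : 0 <= a < 1) by (unfold a; lra).
  assert (Hbs : b * s <= delta / 2).
  { apply Rle_trans with (delta / (2 * s) * s); [apply Rmult_le_compat_r; lra|].
    right. field. lra. }
  destruct (cos_taylor_bounds b) as [Hcb _]; [nra|].
  destruct (cos_taylor_bounds delta) as [_ Hcd]; [lra|].
  set (e := 1 - cos b).
  assert (He : 0 <= e <= b ^ 2 / 2) by (pose proof (COS_bound b); unfold e; lra).
  assert (Hse : s ^ 2 * e <= delta ^ 2 / 8).
  { assert ((b * s) ^ 2 <= (delta / 2) ^ 2) by (apply pow_incr; nra).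
    apply Rle_trans with (s ^ 2 * (b ^ 2 / 2)); [apply Rmult_le_compat_l; nra|].
    assert ((b * s) ^ 2 = s ^ 2 * b ^ 2) by ring. lra. }
  assert (HD1 : 1 <= 1 + 2 * a * cos b + a ^ 2).
  { assert (e <= 1 / 8) by nra. replace (cos b) with (1 - e) by (unfold e; ring). nra. }
  assert (Hcd8 : delta ^ 2 / 8 <= 1 - cos delta).
  { assert (0 <= delta ^ 2 <= 1)
      by (split; [apply pow_le; lra|rewrite <- (pow1 2); apply pow_incr; lra]).
    assert (delta ^ 4 = delta ^ 2 * delta ^ 2) by ring. nra. }
  enough (1 - fst (mobius a b) <= 1 - cos delta) by lra.
  rewrite mobius_re_defect by exact Ha. replace (1 - a) with s by (unfold a; ring).
  apply Rmult_le_reg_r with (1 + 2 * a * cos b + a ^ 2); [lra|].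
  unfold Rdiv. rewrite Rmult_assoc, Rinv_l, Rmult_1_r by lra. fold e. nra.
Qed.

Lemma mobius_small_arc s delta b : 0 < delta <= s -> s <= 1 -> 0 <= b <= delta / (2 * s) ->
  exists theta, Rabs theta <= delta /\ mobius (1 - s) b = cexpi theta.
Proof.
  intros Hdelta Hs Hb. assert (Ha : 0 <= 1 - s < 1) by lra.
  pose proof (mobius_re_ge_cos s delta b Hdelta Hs Hb) as HX.
  pose proof (mobius_norm (1 - s) b Ha) as HXY.
  set (X := fst (mobius (1 - s) b)) in *. set (Y := snd (mobius (1 - s) b)) in *.
  assert (HY : 0 <= Y).
  { assert (b <= 1 / 2).
    { apply Rle_trans with (delta / (2 * s)); [lra|].
      apply Rmult_le_reg_r with (2 * s); [lra|]. field_simplify; lra. }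
    assert (0 <= sin b) by (pose proof PI2_1; apply sin_ge_0; lra).
    unfold Y, mobius; cbn [snd]. apply Rdiv_le_0_compat; [|apply mobius_denom_pos, Ha].
    apply Rmult_le_pos; [lra|]. simpl. nra. }
  assert (HX1 : -1 <= X <= 1) by (split; nra).
  exists (acos X). split.
  - pose proof (acos_bound X). pose proof PI2_1. rewrite Rabs_pos_eq by lra.
    apply cos_decr_0; try lra. now rewrite cos_acos.
  - unfold cexpi. rewrite cos_acos, sin_acos by lra.
    replace (1 - X²) with (Y²) by (unfold Rsqr; simpl in HXY; lra).
    rewrite sqrt_Rsqr by lra. unfold X, Y. now destruct (mobius (1 - s) b).
Qed.

Lemma exp_le_compat x y : x <= y -> exp x <= exp y.
Proof. intros [H|H]; [now left; apply exp_increasing|rewrite H; lra]. Qed.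

Lemma pow_one_minus_le_exp s j : 0 <= s <= 1 -> (1 - s) ^ j <= exp (- (s * INR j)).
Proof.
  intros Hs. induction j as [|j IH]; [simpl; rewrite Rmult_0_r, Ropp_0, exp_0; lra|].
  rewrite S_INR, Rmult_plus_distr_l, Rmult_1_r, Ropp_plus_distr, exp_plus. simpl.
  rewrite Rmult_comm. apply Rmult_le_compat; [apply pow_le; lra|lra|exact IH|].
  pose proof (exp_ineq1_le (- s)). lra.
Qed.

Lemma ln_bounds (n : nat) : (2 <= n)%nat ->
  1 / 2 <= ln (INR n) /\ ln 2 <= ln (INR n) /\ ln (INR n + 3) <= 3 * ln (INR n) /\
  ln (4 * INR n ^ 3) <= 5 * ln (INR n).
Proof.
  intros Hn. assert (H2 : 2 <= INR n) by (apply (le_INR 2), Hn).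
  assert (Hl2 : ln 2 <= ln (INR n)) by (apply ln_le; lra).
  pose proof ln_lt_2.
  replace (3 * ln (INR n)) with (ln (INR n ^ 3)) by (rewrite ln_pow by lra; simpl; ring).
  replace (5 * ln (INR n)) with (ln (INR n ^ 5)) by (rewrite ln_pow by lra; simpl; ring).
  assert (INR n ^ 2 >= 2 * INR n) by (simpl; nra).
  assert (INR n ^ 3 >= 2 * INR n ^ 2) by (simpl; nra).
  repeat split; try lra; apply ln_le; simpl; nra.
Qed.

Lemma dyadic_scales (x : R) (n : nat) : 0 < x ->
  exists r T : nat, (1 <= T <= 2 ^ r)%nat /\ (n <= 2 ^ r)%nat /\
    INR T * x <= INR (2 ^ r) /\ INR (2 ^ r) <= 2 * INR T * (x + 1).
Proof.
  intros Hx. destruct (nfloor_ex x (Rlt_le _ _ Hx)) as [k Hk].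
  set (Q := S k). assert (HQ : x < INR Q <= x + 1) by (unfold Q; rewrite S_INR; lra).
  set (N := (2 ^ (n + Q))%nat).
  assert (HnQ : (n + Q < N)%nat) by (apply Nat.pow_gt_lin_r; lia).
  set (T := (N / Q)%nat).
  assert (HTQ : (Q * T <= N)%nat) by apply Nat.Div0.mul_div_le.
  assert (HNT : (N < Q * (T + 1))%nat).
  { pose proof (Nat.div_mod N Q ltac:(unfold Q; lia)) as Hdiv.
    pose proof (Nat.mod_upper_bound N Q ltac:(unfold Q; lia)). fold T in Hdiv. lia. }
  assert (HT1 : (1 <= T)%nat) by nia.
  exists (n + Q)%nat, T. fold N. repeat split; try lia.
  - apply Rle_trans with (INR T * INR Q); [apply Rmult_le_compat_l; [apply pos_INR|lra]|].
    rewrite <- mult_INR, Nat.mul_comm. now apply le_INR.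
  - apply Rle_trans with (INR Q * (INR T + INR T)).
    + rewrite <- !plus_INR, <- mult_INR. apply le_INR. nia.
    + assert (1 <= INR T) by (apply (le_INR 1), HT1). nra.
Qed.

Lemma neg_ln_half_le (n : nat) s : (2 <= n)%nat -> 1 / INR n <= s <= 1 ->
  - ln (s / 2) <= 2 * ln (INR n).
Proof.
  intros Hn Hs. assert (Hn2 : 2 <= INR n) by (apply (le_INR 2), Hn).
  assert (Hns : 1 <= INR n * s).
  { apply Rmult_le_reg_l with (/ INR n); [apply Rinv_0_lt_compat; lra|].
    rewrite <- Rmult_assoc, Rinv_l, Rmult_1_l, Rmult_1_r by lra. lra. }
  assert (Hs0 : 0 < s) by nra.
  rewrite <- ln_Rinv by lra.
  replace (2 * ln (INR n)) with (ln (INR n ^ 2)) by (rewrite ln_pow by lra; simpl; ring).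
  apply ln_le; [apply Rinv_0_lt_compat; lra|].
  replace (/ (s / 2)) with (2 / s) by (field; lra).
  apply Rmult_le_reg_r with s; [lra|].
  unfold Rdiv. rewrite Rmult_assoc, Rinv_l by lra. simpl. nra.
Qed.

(* Taking logarithms gives T K m L^5 <= 6 N L with L = ln n, while N <= 2 T (20π + 2) L m;
   together K L^3 <= 12 (20π + 2), which fails since L^3 >= 1/8. *)
Lemma exponent_contradiction (K : R) (n N T : nat) (m s : R) : 10000 <= K ->
  (2 <= n)%nat -> (1 <= T <= N)%nat -> (n <= N)%nat -> 1 <= m ->
  1 / INR n <= s <= 1 -> s * m <= 5 * ln (INR n) ->
  INR N <= 2 * INR T * (4 * PI * s * m ^ 2 + 1) ->
  (s / 2) ^ N <= 2 ^ n * (exp (- K * m * ln (INR n) ^ 5) ^ T * (INR n + 3) ^ (N - T)) ->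
  False.
Proof.
  intros HK Hn HT HnN Hm Hs Hsm HN Hineq.
  destruct (ln_bounds n Hn) as [HL [HL2 [HL3 _]]]. set (L := ln (INR n)) in *.
  assert (Hn2 : 2 <= INR n) by (apply (le_INR 2), Hn).
  assert (Hs2 := neg_ln_half_le n s Hn Hs). fold L in Hs2.
  assert (Hs0 : 0 < s) by (assert (0 < 1 / INR n) by (apply Rdiv_lt_0_compat; lra); lra).
  assert (HTr : 1 <= INR T) by (apply (le_INR 1); lia).
  assert (HNr : INR n <= INR N /\ INR T <= INR N) by (split; apply le_INR; lia).
  assert (HNTr : INR (N - T) <= INR N) by (apply le_INR; lia).
  apply ln_le in Hineq; [|apply pow_lt; lra].
  rewrite ln_mult, ln_mult, !ln_pow, ln_exp in Hineq
    by (try apply Rmult_lt_0_compat; try apply pow_lt; try apply exp_pos; lra).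
  assert (Hkey : INR T * (K * m * L ^ 5) <= 6 * INR N * L).
  { assert (0 <= ln (INR n + 3)) by (rewrite <- ln_1; apply ln_le; lra).
    assert (INR (N - T) * ln (INR n + 3) <= INR N * (3 * L)) by nra.
    fold L in Hineq. nra. }
  assert (HNL : INR N <= 2 * INR T * ((20 * PI + 2) * L * m)).
  { pose proof PI_RGT_0.
    assert (4 * PI * s * m ^ 2 <= 20 * PI * L * m).
    { replace (4 * PI * s * m ^ 2) with ((4 * PI * m) * (s * m)) by ring.
      replace (20 * PI * L * m) with ((4 * PI * m) * (5 * L)) by ring.
      apply Rmult_le_compat_l; [nra|lra]. }
    assert (1 <= 2 * L * m) by nra.
    eapply Rle_trans; [exact HN|]. apply Rmult_le_compat_l; [lra|]. nra. }
  assert (Hchain : INR T * m * L ^ 2 * (K * L ^ 3)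
                   <= INR T * m * L ^ 2 * (12 * (20 * PI + 2))).
  { replace (INR T * m * L ^ 2 * (K * L ^ 3)) with (INR T * (K * m * L ^ 5)) by ring.
    eapply Rle_trans; [exact Hkey|].
    replace (INR T * m * L ^ 2 * (12 * (20 * PI + 2)))
      with (6 * L * (2 * INR T * ((20 * PI + 2) * L * m))) by ring.
    replace (6 * INR N * L) with (6 * L * INR N) by ring.
    apply Rmult_le_compat_l; lra. }
  apply Rmult_le_reg_l in Hchain; [|apply Rmult_lt_0_compat; [nra|apply pow_lt; lra]].
  assert (1 / 8 <= L ^ 3) by (simpl; nra).
  pose proof PI_4. nra.
Qed.

Lemma n15_le (n : nat) : (1 <= n)%nat -> n15 n <= INR n.
Proof.
  intros Hn. assert (1 <= INR n) by (apply (le_INR 1), Hn).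
  unfold n15. rewrite <- (Rpower_1 (INR n)) at 2 by lra. apply Rle_Rpower; lra.
Qed.

Lemma Rpower_neg_two_fifths (n : nat) : (1 <= n)%nat -> Rpower (INR n) (- (2 / 5)) = / n15 n ^ 2.
Proof.
  intros Hn. assert (0 < INR n) by (apply (lt_INR 0), Hn).
  unfold n15. rewrite Rpower_Ropp, <- Rpower_pow, Rpower_mult by (apply exp_pos).
  do 2 f_equal. simpl. field.
Qed.

Lemma radial_scale (n : nat) (m : R) : (2 <= n)%nat -> 1 < m <= INR n ->
  exists s, / m ^ 2 <= s <= 1 /\ 1 / INR n <= s /\ s * m <= 5 * ln (INR n) /\
    forall j : nat, m <= INR j -> (1 - s) ^ j <= / (4 * INR n ^ 3).
Proof.
  intros Hn Hm. assert (Hn2 : 2 <= INR n) by (apply (le_INR 2), Hn).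
  destruct (ln_bounds n Hn) as [_ [_ [_ Hlam5]]]. set (lam := ln (4 * INR n ^ 3)) in *.
  assert (Hcube : 0 < 4 * INR n ^ 3) by (apply Rmult_lt_0_compat, pow_lt; lra).
  assert (Hlam1 : 1 <= lam).
  { rewrite <- (ln_exp 1). apply ln_le; [apply exp_pos|]. pose proof exp_le_3. simpl. nra. }
  assert (Hinvm : / m ^ 2 <= 1 / m /\ 1 / INR n <= 1 / m /\ 1 / m <= lam / m /\ 1 / m <= 1).
  { repeat split; unfold Rdiv; rewrite ?Rmult_1_l.
    - apply Rinv_le_contravar; simpl; nra.
    - apply Rinv_le_contravar; lra.
    - rewrite <- (Rmult_1_l (/ m)) at 1.
      apply Rmult_le_compat_r; [left; apply Rinv_0_lt_compat|]; lra.
    - rewrite <- Rinv_1. apply Rinv_le_contravar; lra. }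
  exists (Rmin (lam / m) 1). repeat split.
  - apply Rle_trans with (1 / m); [lra|]. apply Rmin_glb; lra.
  - apply Rmin_r.
  - apply Rle_trans with (1 / m); [lra|]. apply Rmin_glb; lra.
  - apply Rle_trans with (lam / m * m); [apply Rmult_le_compat_r; [lra|apply Rmin_l]|].
    replace (lam / m * m) with lam by (field; lra). exact Hlam5.
  - intros j Hj.
    replace (/ (4 * INR n ^ 3)) with (exp (- lam))
      by (unfold lam; rewrite exp_Ropp, exp_ln by exact Hcube; reflexivity).
    destruct (Rle_dec (lam / m) 1) as [Hle|Hgt].
    + rewrite Rmin_left by exact Hle.
      eapply Rle_trans; [apply pow_one_minus_le_exp; split; [|exact Hle]|apply exp_le_compat].
      * apply Rdiv_le_0_compat; lra.
      * apply Ropp_le_contravar. apply Rle_trans with (lam / m * m); [right; field; lra|].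
        apply Rmult_le_compat_l; [apply Rdiv_le_0_compat|]; lra.
    + rewrite Rmin_right by lra. destruct j as [|j]; [simpl in Hj; lra|].
      rewrite Rminus_diag, pow_i by lia. left. apply exp_pos.
Qed.

(** * The lacunary polynomial *)

Section Lacunary_polynomial.

Variables (n d : nat) (sigma : bool) (c : nat -> C).
Hypothesis Hd1 : (1 <= d)%nat.
Hypothesis Hdn : (d <= n)%nat.
Hypothesis Hc : forall j, n15 n <= INR j -> (j <= n)%nat -> Cmod (c j) <= 1.

Let p := pval n d sigma c.
Let tail (z : C) : C :=
  sum_n (fun j => if Rle_dec (n15 n) (INR j) then Cmult (c j) (Cpow z j) else RtoC 0) n.

Lemma pval_split z : p z = (1 - (if sigma then 1 else 0) * z ^ d + tail z)%C.
Proof. reflexivity. Qed.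

Lemma is_poly_pval : is_poly p n.
Proof.
  eapply is_poly_ext; [intros z; symmetry; apply pval_split|]. apply is_poly_add.
  - eapply is_poly_ext
      with (f := (fun z => 1 + (- (if sigma then 1 else 0)) * (z ^ d * 1))%C);
      [intros z; ring|].
    apply is_poly_add; [apply is_poly_weaken with 0%nat; [lia|apply is_poly_const]|].
    apply is_poly_scal, is_poly_weaken with (d + 0)%nat; [lia|].
    apply is_poly_mul_Xn, is_poly_const.
  - apply is_poly_sum. intros j Hj. destruct (Rle_dec (n15 n) (INR j)).
    + apply is_poly_scal. eapply is_poly_ext with (f := (fun z => z ^ j * 1)%C); [intros z; ring|].
      apply is_poly_weaken with (j + 0)%nat; [lia|]. apply is_poly_mul_Xn, is_poly_const.
    + apply is_poly_weaken with 0%nat; [lia|apply is_poly_const].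
Qed.

Lemma Cmod_tail_le (z : C) e : 0 <= e ->
  (forall j, n15 n <= INR j -> (j <= n)%nat -> Cmod z ^ j <= e) ->
  Cmod (tail z) <= (INR n + 1) * e.
Proof.
  intros He Hz. rewrite <- S_INR. apply Cmod_sum_n_le. intros j Hj.
  destruct (Rle_dec (n15 n) (INR j)) as [Hm|Hm]; [|rewrite Cmod_0; lra].
  rewrite Cmod_mult, Cmod_pow. rewrite <- (Rmult_1_l e).
  apply Rmult_le_compat; try apply Cmod_ge_0; [apply pow_le, Cmod_ge_0|now apply Hc|now apply Hz].
Qed.

Lemma pval_le_on_circle w : Cmod w = 1 -> Cmod (p w) <= INR n + 3.
Proof.
  intros Hw. rewrite pval_split.
  assert (Htail : Cmod (tail w) <= (INR n + 1) * 1)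
    by (apply Cmod_tail_le; [lra|]; intros; rewrite Hw, pow1; lra).
  assert (Hmono : Cmod ((if sigma then 1 else 0) * w ^ d)%C <= 1)
    by (rewrite Cmod_mult, Cmod_pow, Hw, pow1, Rmult_1_r; destruct sigma;
        rewrite Cmod_R, Rabs_pos_eq; lra).
  eapply Rle_trans; [apply Cmod_triangle|]. unfold Cminus.
  eapply Rle_trans; [apply Rplus_le_compat_r, Cmod_triangle|].
  rewrite Cmod_opp, Cmod_1. lra.
Qed.

Lemma pval_ge_on_radius (a e : R) : 0 <= a < 1 -> 0 <= e ->
  (forall j, n15 n <= INR j -> a ^ j <= e) ->
  (1 - a) - (INR n + 1) * e <= Cmod (p (RtoC a)).
Proof.
  intros Ha He Hae. rewrite pval_split.
  assert (Htail : Cmod (tail (RtoC a)) <= (INR n + 1) * e)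
    by (apply Cmod_tail_le; [exact He|]; intros j Hj _; rewrite Cmod_R, Rabs_pos_eq by lra; auto).
  assert (Had : a ^ d <= a).
  { destruct d as [|d']; [lia|]. simpl.
    assert (a ^ d' <= 1) by (rewrite <- (pow1 d'); apply pow_incr; lra). nra. }
  assert (Hhead : 1 - a <= Cmod (1 - (if sigma then 1 else 0) * RtoC a ^ d)%C).
  { assert (0 <= a ^ d) by (apply pow_le; lra).
    rewrite <- RtoC_pow. destruct sigma.
    - rewrite <- RtoC_mult, <- RtoC_minus, Cmod_R, Rabs_pos_eq; lra.
    - replace (1 - 0 * RtoC (a ^ d))%C with (RtoC 1) by ring. rewrite Cmod_1. lra. }
  pose proof (Cmod_triangle (1 - (if sigma then 1 else 0) * RtoC a ^ d + tail (RtoC a))%C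
                            (- tail (RtoC a))%C) as Htri.
  rewrite Cmod_opp in Htri.
  replace (1 - (if sigma then 1 else 0) * RtoC a ^ d + tail (RtoC a) + - tail (RtoC a))%C
    with (1 - (if sigma then 1 else 0) * RtoC a ^ d)%C in Htri by ring.
  lra.
Qed.

Lemma pval_radial_power_le s delta eps r T :
  0 < delta <= s -> s <= 1 ->
  (forall theta, Rabs theta <= delta -> Cmod (p (cexpi theta)) <= eps) ->
  (T <= 2 ^ r)%nat -> INR T * (2 * PI / INR (2 ^ r)) <= delta / (2 * s) ->
  Cmod (p (RtoC (1 - s))) ^ 2 ^ r <= 2 ^ n * (eps ^ T * (INR n + 3) ^ (2 ^ r - T)).
Proof.
  intros Hdelta Hs Hsmall HT Hang.
  set (a := 1 - s). assert (Ha : 0 <= a < 1) by (unfold a; lra).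
  set (N := (2 ^ r)%nat) in *.
  assert (HN : (0 < N)%nat) by (apply Nat.neq_0_lt_0, Nat.pow_nonzero; lia).
  destruct (is_poly_mobius_transform p n (RtoC a) is_poly_pval) as [P [HP HPw]].
  destruct (rotation_product_lower_bound P n N HP HN) as [beta [Hbeta Hprod]].
  set (angle := fun k => beta + INR k * (2 * PI / INR N)) in Hprod.
  assert (HP0 : P 0%C = p (RtoC a)).
  { rewrite (HPw 0%C (RtoC a)) by ring. rewrite Cmult_0_r, Cplus_0_r, Cpow_1_l. ring. }
  assert (HPk : forall k, P (cexpi (angle k))
                  = ((1 + RtoC a * cexpi (angle k)) ^ n * p (mobius a (angle k)))%C)
    by (intros k; apply HPw, mobius_spec, Ha).
  rewrite HP0, (cprod_ext _ _ _ (fun k _ => HPk k)), cprod_mul, Cmod_mult, cprod_pow, Cmod_pow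
    in Hprod.
  eapply Rle_trans; [exact Hprod|].
  apply Rmult_le_compat; try apply pow_le; try apply Cmod_ge_0.
  - apply pow_incr. split; [apply Cmod_ge_0|]. apply Cmod_cprod_one_plus_rotated_roots. lra.
  - apply Cmod_cprod_le; [exact HT| |].
    + intros k Hk. assert (HNr : 0 < INR N) by (apply lt_0_INR; lia).
      assert (Hk1 : INR k + 1 <= INR T) by (rewrite <- S_INR; apply le_INR; lia).
      assert (0 <= INR k) by apply pos_INR.
      assert (0 < 2 * PI / INR N) by (pose proof PI_RGT_0; apply Rdiv_lt_0_compat; lra).
      destruct (mobius_small_arc s delta (angle k)) as [theta [Htheta Hw]]; auto.
      { unfold angle. split; [nra|]. apply Rle_trans with (INR T * (2 * PI / INR N)); [nra|lra]. }
      fold a in Hw. rewrite Hw. now apply Hsmall.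
    + intros k _. apply pval_le_on_circle, Cmod_mobius, Ha.
Qed.

Lemma pval_radial_lower_bound : (2 <= n)%nat -> 1 < n15 n ->
  exists s, / n15 n ^ 2 <= s <= 1 /\ 1 / INR n <= s /\ s * n15 n <= 5 * ln (INR n) /\
    s / 2 <= Cmod (p (RtoC (1 - s))).
Proof.
  intros Hn Hm. assert (Hn2 : 2 <= INR n) by (apply (le_INR 2), Hn).
  destruct (radial_scale n (n15 n) Hn (conj Hm (n15_le n ltac:(lia))))
    as [s [Hs [Hsn [Hsm Hpow]]]].
  exists s. repeat split; try lra.
  assert (Hcube : 0 < / (4 * INR n ^ 3)) by (apply Rinv_0_lt_compat; simpl; nra).
  assert (Hlow : (1 - (1 - s)) - (INR n + 1) * / (4 * INR n ^ 3) <= Cmod (p (RtoC (1 - s)))).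
  { apply pval_ge_on_radius; [|lra|exact Hpow].
    assert (0 < 1 / INR n) by (apply Rdiv_lt_0_compat; lra). lra. }
  assert ((INR n + 1) * / (4 * INR n ^ 3) <= 1 / INR n / 2); [|lra].
  apply Rmult_le_reg_r with (4 * INR n ^ 3); [simpl; nra|].
  rewrite Rmult_assoc, Rinv_l, Rmult_1_r by (simpl; nra).
  replace (1 / INR n / 2 * (4 * INR n ^ 3)) with (2 * INR n ^ 2) by (field; lra).
  simpl. nra.
Qed.

Lemma pval_large_on_arc K : 10000 <= K -> (2 <= n)%nat -> 1 < n15 n ->
  exists theta, Rabs theta <= / n15 n ^ 2 /\
    exp (- K * n15 n * ln (INR n) ^ 5) <= Cmod (p (cexpi theta)).
Proof.
  intros HK Hn Hm. set (eps := exp (- K * n15 n * ln (INR n) ^ 5)).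
  apply NNPP. intros Hno.
  assert (Hsmall : forall theta, Rabs theta <= / n15 n ^ 2 -> Cmod (p (cexpi theta)) <= eps).
  { intros theta Htheta. apply Rnot_lt_le. intros Hlt. apply Hno. exists theta. lra. }
  destruct (pval_radial_lower_bound Hn Hm) as [s [Hs [Hsn [Hsm Hps]]]].
  set (m := n15 n) in *.
  assert (Hdelta : 0 < / m ^ 2) by (apply Rinv_0_lt_compat, pow_lt; lra).
  destruct (dyadic_scales (4 * PI * s * m ^ 2) n) as [r [T [HT [HnN [HTx HNx]]]]].
  { pose proof PI_RGT_0. apply Rmult_lt_0_compat; [nra|apply pow_lt; lra]. }
  apply (exponent_contradiction K n (2 ^ r) T m s); auto; try lra.
  eapply Rle_trans; [apply pow_incr; split; [lra|exact Hps]|].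
  apply (pval_radial_power_le s (/ m ^ 2) eps r T); auto; try lra; try lia.
  assert (HN : 0 < INR (2 ^ r)) by (apply lt_0_INR; lia).
  assert (Hm2 : 0 < m ^ 2) by (apply pow_lt; lra).
  apply Rmult_le_reg_r with (2 * s * m ^ 2 * INR (2 ^ r)); [apply Rmult_lt_0_compat; nra|].
  replace (/ m ^ 2 / (2 * s) * (2 * s * m ^ 2 * INR (2 ^ r))) with (INR (2 ^ r))
    by (field; lra).
  replace (INR T * (2 * PI / INR (2 ^ r)) * (2 * s * m ^ 2 * INR (2 ^ r)))
    with (INR T * (4 * PI * s * m ^ 2)) by (field; lra).
  exact HTx.
Qed.

End Lacunary_polynomial.

Theorem theorem3 :
  exists K : R, 0 < K /\
  forall (n d : nat) (sigma : bool) (c : nat -> C),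
    (2 <= n)%nat ->
    (1 <= d)%nat -> INR d < n15 n ->
    (forall j : nat, n15 n <= INR j -> (j <= n)%nat -> Cmod (c j) <= 1) ->
    exists theta : R,
      Rabs theta <= Rpower (INR n) (- (2/5)) /\
      exp (- K * n15 n * (ln (INR n)) ^ 5) <= Cmod (pval n d sigma c (cexpi theta)).
Proof.
  exists 10000. split; [lra|].
  intros n d sigma c Hn Hd1 Hdm Hc.
  assert (Hm : 1 < n15 n) by (assert (1 <= INR d) by apply (le_INR 1), Hd1; lra).
  assert (Hdn : (d <= n)%nat) by (apply INR_le; pose proof (n15_le n ltac:(lia)); lra).
  rewrite Rpower_neg_two_fifths by lia.
  apply pval_large_on_arc; auto; lra.
Qed.
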